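(* Assume $\nu_0\ge 2$. The sets $\mathcal{V}_i^1$, $i\in[1,\nu_0]$, are pairwise disjoint cycles contained in $\overline{\Omega}$. Moreover, for each $i$, the bottom of $\mathcal{V}_i^1$ is $\mathcal{F}(\mathcal{V}_i^1)=\mathcal{P}_i^1$, and its depth is $\Gamma^{\mathcal{V}_i^1}=\Gamma_i^1$.
   Context: Let $\Omega$ be a finite set equipped with a connected undirected graph structure; write $\eta\sim\xi$ if $\{\eta,\xi\}$ is an edge. Let $\mathbb{H}:\Omega\to\mathbb{R}$ be a function. A path $\omega:\eta\to\xi$ is a sequence $\omega=(\omega_n)_{n=0}^N$ with $\omega_0=\eta$, $\omega_N=\xi$ and $\omega_n\sim\omega_{n+1}$ for all $n$; $N=0$ is allowed. Its height is $\Phi_\omega:=\max_{0\le n\le N}\mathbb{H}(\omega_n)$. The communication height is $\Phi(\eta,\xi):=\min_{\omega:\eta\to\xi}\Phi_\omega$. For nonempty sets $\mathcal{A},\mathcal{B}$, write $\Phi(\mathcal{A},\mathcal{B}):=\min_{\eta\in\mathcal{A},\xi\in\mathcal{B}}\Phi(\eta,\xi)$ and $\Phi(\mathcal{A},\eta):=\Phi(\mathcal{A},\{\eta\})$. Let $\mathcal{S}:=\operatorname{argmin}_\Omega\mathbb{H}$ be the set of ground states. Define $\overline{\Phi}:=\max_{s,s'\in\mathcal{S}}\Phi(s,s')$ and $\overline{\Omega}:=\{\eta\in\Omega:\Phi(\mathcal{S},\eta)\le\overline{\Phi}\}$. For $\mathcal{A}\subseteq\Omega$, define $\mathcal{F}(\mathcal{A}):=\operatorname{argmin}_{\mathcal{A}}\mathbb{H}$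 and $\partial\mathcal{A}:=\{\eta\notin\mathcal{A}:\eta\sim\xi\text{ for some }\xi\in\mathcal{A}\}$. A set $\mathcal{A}$ is connected if any two of its points are joined by a path lying inside $\mathcal{A}$. A stable plateau is a nonempty connected set $\mathcal{P}$ on which $\mathbb{H}$ is constant, with value $\mathbb{H}(\mathcal{P})$, such that $\mathbb{H}(\zeta)>\mathbb{H}(\mathcal{P})$ for all $\zeta\in\partial\mathcal{P}$. A cycle is a nonempty connected set $\mathcal{C}$ with $\max_{\mathcal{C}}\mathbb{H}<\min_{\partial\mathcal{C}}\mathbb{H}$. Its depth is $\Gamma^{\mathcal{C}}:=\min_{\partial\mathcal{C}}\mathbb{H}-\min_{\mathcal{C}}\mathbb{H}$. Let $\mathscr{P}^1=\{\mathcal{P}_1^1,\dots,\mathcal{P}_{\nu_0}^1\}$ be the collection of all stable plateaux contained in $\overline{\Omega}$. For $i\in[1,\nu_0]$, set $\breve{\mathcal{P}}_i^1:=\bigcup_{j\ne i}\mathcal{P}_j^1$. Define the initial depth $\Gamma_i^1:=\Phi(\mathcal{P}_i^1,\breve{\mathcal{P}}_i^1)-\mathbb{H}(\mathcal{P}_i^1)$ and the set $\mathcal{V}_i^1:=\{\eta\in\Omega:\Phi(\mathcal{P}_i^1,\eta)-\mathbb{H}(\mathcal{P}_i^1)<\Gamma_i^1\}$. Here $[a,b]$ denotes the set of integers from $a$ to $b$. *)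

From mathcomp Require Import all_boot all_order all_algebra.
From mathcomp Require Import boolp classical_sets reals.
Set Implicit Arguments. Unset Strict Implicit. Unset Printing Implicit Defensive.
Import Order.TTheory GRing.Theory Num.Theory.
Local Open Scope classical_set_scope.
Local Open Scope ring_scope.

Section Energy.
Variables (R : realType) (Omega : finType) (e : rel Omega) (H : Omega -> R).

Definition minR (S : set R) : R := xget 0 [set m | S m /\ forall s, S s -> m <= s].
Definition maxR (S : set R) : R := xget 0 [set m | S m /\ forall s, S s -> s <= m].

(* a path from x to y is the sequence x :: p with consecutive vertices adjacent *)
Definition is_path (x y : Omega) (p : seq Omega) : Prop :=
  path e x p /\ last x p = y.

Definition path_height (x : Omega) (p : seq Omega) : R :=
  \big[Num.max/H x]_(z <- p) H z.

Definition comm_height (x y : Omega) : R :=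
  minR [set path_height x p | p in [set p | is_path x y p]].

Definition comm_height_set (A B : set Omega) : R :=
  minR [set c | exists a b, A a /\ B b /\ c = comm_height a b].

Definition ground_states : set Omega := [set s | forall z, H s <= H z].

Definition Phibar : R :=
  maxR [set c | exists s s', ground_states s /\ ground_states s' /\ c = comm_height s s'].

Definition Omegabar : set Omega :=
  [set z | comm_height_set ground_states [set z] <= Phibar].

Definition bottom (A : set Omega) : set Omega :=
  [set z | A z /\ forall y, A y -> H z <= H y].

Definition boundary (A : set Omega) : set Omega :=
  [set z | ~ A z /\ exists y, A y /\ e z y].

Definition connected_set (A : set Omega) : Prop :=
  forall x y, A x -> A y -> exists p, is_path x y p /\ forall z, z \in x :: p -> A z.

Definition stable_plateau (P : set Omega) : Prop :=
  P !=set0 /\ connected_set P /\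
  exists c, (forall x, P x -> H x = c) /\ (forall z, boundary P z -> c < H z).

(* the (constant) value H(P) of H on P *)
Definition valH (P : set Omega) : R := xget 0 (H @` P).

(* max_C H < min_{dC} H  (vacuous if the boundary is empty, i.e. min = +oo) *)
Definition is_cycle (C : set Omega) : Prop :=
  C !=set0 /\ connected_set C /\
  forall x z, C x -> boundary C z -> H x < H z.

Definition depth (C : set Omega) : R :=
  minR (H @` boundary C) - minR (H @` C).

Definition plateaux1 (P : set Omega) : Prop := stable_plateau P /\ P `<=` Omegabar.

Definition breve (P : set Omega) : set Omega :=
  [set z | exists Q, plateaux1 Q /\ Q <> P /\ Q z].

Definition Gamma1 (P : set Omega) : R :=
  comm_height_set P (breve P) - valH P.

Definition V1 (P : set Omega) : set Omega :=
  [set z | comm_height_set P [set z] - valH P < Gamma1 P].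

End Energy.

From mathcomp Require Import all_boot all_order all_algebra.
From mathcomp Require Import boolp classical_sets reals.
Import Order.TTheory GRing.Theory Num.Theory.
Set Implicit Arguments. Unset Strict Implicit. Unset Printing Implicit Defensive.
Local Open Scope classical_set_scope.
Local Open Scope ring_scope.

(* The communication height is an ultrametric: Phi(x, z) <= max(Phi(x, y),
   Phi(y, z)). Put c := Phi(P, breve P); then V1 P is the set of states that
   can be reached from P along paths staying strictly below c. Hence V1 P is
   connected, H < c on it and H >= c on its boundary, and an optimal path from
   P to breve P leaves it through a boundary state of height exactly c, which
   gives the depth. If a minimiser z of H on V1 P were not in P, its level
   component in V1 P would be a stable plateau of Omegabar other than P, i.e.
   a part of breve P inside V1 P, contradicting the definition of c. Finally a
   common state of V1 P and V1 Q would connect P to Q strictly below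
   min(Phi(P, breve P), Phi(Q, breve Q)), which is impossible since Q lies in
   breve P and P in breve Q. *)

Lemma minR_min (R : realType) (S : set R) :
  (exists m, S m /\ forall s, S s -> m <= s) ->
  S (minR S) /\ forall s, S s -> minR S <= s.
Proof. exact: xgetPex. Qed.

Lemma maxR_max (R : realType) (S : set R) :
  (exists m, S m /\ forall s, S s -> s <= m) ->
  S (maxR S) /\ forall s, S s -> s <= maxR S.
Proof. exact: xgetPex. Qed.

Lemma minR_eq (R : realType) (S : set R) m :
  S m -> (forall s, S s -> m <= s) -> minR S = m.
Proof.
move=> Sm mmin; have [Smin minle] := minR_min (ex_intro _ m (conj Sm mmin)).
by apply/le_anti; rewrite minle //= mmin.
Qed.

Section FiniteExtrema.
Variables (R : realType) (T : finType) (f : T -> R).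

Lemma exists_min_in_range (S : set R) : S !=set0 -> S `<=` range f ->
  exists2 m, S m & forall s, S s -> m <= s.
Proof.
case=> s0 S0 Sf; have [w0 _ fw0] := Sf _ S0.
pose inS w := `[< S (f w) >].
have Sw0 : inS w0 by apply/asboolP; rewrite fw0.
case: (arg_minP f Sw0) => w /asboolP Sw wmin.
exists (f w) => // s Ss; have [w' _ fw'] := Sf _ Ss; subst s.
exact/wmin/asboolP.
Qed.

Lemma exists_max_in_range (S : set R) : S !=set0 -> S `<=` range f ->
  exists2 m, S m & forall s, S s -> s <= m.
Proof.
case=> s0 S0 Sf; have [w0 _ fw0] := Sf _ S0.
pose inS w := `[< S (f w) >].
have Sw0 : inS w0 by apply/asboolP; rewrite fw0.
case: (arg_maxP f Sw0) => w /asboolP Sw wmax.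
exists (f w) => // s Ss; have [w' _ fw'] := Sf _ Ss; subst s.
exact/wmax/asboolP.
Qed.

Lemma minRP (S : set R) : S !=set0 -> S `<=` range f ->
  S (minR S) /\ forall s, S s -> minR S <= s.
Proof.
move=> S0 Sf; have [m Sm mmin] := exists_min_in_range S0 Sf.
by apply: minR_min; exists m.
Qed.

Lemma maxRP (S : set R) : S !=set0 -> S `<=` range f ->
  S (maxR S) /\ forall s, S s -> s <= maxR S.
Proof.
move=> S0 Sf; have [m Sm mmax] := exists_max_in_range S0 Sf.
by apply: maxR_max; exists m.
Qed.

End FiniteExtrema.

Section Paths.
Variables (R : realType) (Omega : finType) (e : rel Omega) (H : Omega -> R).

Lemma path_height_le x p d :
  (path_height H x p <= d) = all (fun w => H w <= d) (x :: p).
Proof.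
elim: p => [|z p IHp]; first by rewrite /path_height big_nil /= andbT.
by rewrite /path_height big_cons ge_max -/(path_height H x p) IHp /= andbCA.
Qed.

Lemma path_height_attained x p :
  exists2 w, w \in x :: p & H w = path_height H x p.
Proof.
elim: p => [|z p [w wp Hw]]; first by exists x; rewrite ?mem_head ?/path_height ?big_nil.
rewrite /path_height big_cons -/(path_height H x p) -Hw.
have [Hzw|Hwz] := leP (H z) (H w).
- by exists w; rewrite // !inE in wp *; case/orP: wp => ->; rewrite ?orbT.
- by exists z; rewrite // !inE eqxx orbT.
Qed.

Definition connect_in (A : set Omega) x y :=
  exists p, is_path e x y p /\ forall w, w \in x :: p -> A w.

Lemma connect_in_refl (A : set Omega) x : A x -> connect_in A x x.
Proof. by move=> Ax; exists [::]; split=> // w; rewrite inE => /eqP ->. Qed.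

Lemma connect_in_ends (A : set Omega) x y : connect_in A x y -> A x /\ A y.
Proof.
case=> p [[_ <-] Ap]; split; first by apply: Ap; rewrite mem_head.
exact/Ap/mem_last.
Qed.

Lemma connect_in_trans (A : set Omega) x y z :
  connect_in A x y -> connect_in A y z -> connect_in A x z.
Proof.
case=> p [[pp lp] Ap] [q [[pq lq] Aq]]; exists (p ++ q); split.
  by split; rewrite ?cat_path ?last_cat lp ?pp ?pq.
move=> w; rewrite in_cons mem_cat => /orP [/eqP->|/orP [wp|wq]].
- by apply: Ap; rewrite mem_head.
- by apply: Ap; rewrite in_cons wp orbT.
- by apply: Aq; rewrite in_cons wq orbT.
Qed.

Lemma connect_in_edge (A : set Omega) x y z :
  connect_in A x y -> A z -> e y z -> connect_in A x z.
Proof.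
move=> Axy Az eyz; apply: (connect_in_trans Axy); exists [:: z].
have [_ Ay] := connect_in_ends Axy.
by split=> [|w]; [rewrite /is_path /= eyz | rewrite !inE => /orP [] /eqP ->].
Qed.

Lemma connect_in_sub (A B : set Omega) x y :
  A `<=` B -> connect_in A x y -> connect_in B x y.
Proof. by move=> AB [p [pp Ap]]; exists p; split=> // w /Ap /AB. Qed.

Lemma is_path_prefix x y p w : is_path e x y p -> w \in x :: p ->
  exists q, is_path e x w q /\ forall u, u \in x :: q -> u \in x :: p.
Proof.
elim: p x => [|z p IHp] x [pp lp].
  by rewrite inE => /eqP ->; exists [::].
rewrite in_cons => /orP [/eqP ->|wp].
  by exists [::]; split=> // u; rewrite inE => /eqP ->; rewrite mem_head.
move: pp => /= /andP [exz pzp].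
have [q [[pq lq] qp]] := IHp z (conj pzp lp) wp.
exists (z :: q); split; first by split=> //=; rewrite exz pq.
move=> u; rewrite in_cons => /orP [/eqP ->|uq]; first by rewrite mem_head.
by rewrite in_cons qp ?orbT.
Qed.

Lemma connect_in_restrict (A B : set Omega) x y :
  connect_in A x y -> (forall w, connect_in A x w -> B w) -> connect_in B x y.
Proof.
case=> p [pp Ap] AB; exists p; split=> // w wp.
have [q [pq qp]] := is_path_prefix pp wp.
by apply: AB; exists q; split=> // u /qp /Ap.
Qed.

Lemma connect_in_exit (A B : set Omega) x y :
  connect_in A x y -> B x -> ~ B y -> exists u v, [/\ B u, ~ B v, e u v & A v].
Proof.
case=> p [[pp lp] Ap]; elim: p x pp lp Ap => [|z p IHp] x pp lp Ap Bx nBy.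
  by rewrite -lp in nBy.
move: pp => /= /andP [exz pzp].
have Az : A z by apply: Ap; rewrite !inE eqxx orbT.
have [Bz|nBz] := pselect (B z); last by exists x, z.
by apply: (IHp z pzp lp) => // w wp; apply: Ap; rewrite in_cons wp orbT.
Qed.

Hypothesis e_sym : symmetric e.

Lemma connect_in_sym (A : set Omega) x y : connect_in A x y -> connect_in A y x.
Proof.
case=> p [[pp lp] Ap].
have rev_xp : y :: rev (belast x p) = rev (x :: p).
  by rewrite [x :: p]lastI rev_rcons lp.
exists (rev (belast x p)); split; last by move=> w; rewrite rev_xp mem_rev; apply: Ap.
split; first by rewrite -lp rev_path (eq_path (e' := e)) // => a b; rewrite /= e_sym.
by rewrite -[last y _]/(last y (y :: rev (belast x p))) rev_xp rev_cons last_rcons.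
Qed.

End Paths.

Section CommunicationHeight.
Variables (R : realType) (Omega : finType) (e : rel Omega) (H : Omega -> R).
Hypothesis e_sym : symmetric e.
Hypothesis e_conn : forall x y : Omega, exists p, is_path e x y p.

Local Notation Phi := (comm_height e H).
Local Notation connect_in := (connect_in e).

Lemma comm_height_attained x y : exists p, [/\ is_path e x y p,
  path_height H x p = Phi x y & forall q, is_path e x y q -> Phi x y <= path_height H x q].
Proof.
have [] := @minRP _ _ H [set path_height H x p | p in [set p | is_path e x y p]].
- by have [p pp] := e_conn x y; exists (path_height H x p), p.
- by move=> s [p _ <-]; have [w _ Hw] := path_height_attained H x p; exists w.
move=> [p pp Hp] pmin; exists p; split=> // q pq.
by apply: pmin; exists q.
Qed.

Lemma comm_height_le x y d : connect_in [set w | H w <= d] x y -> Phi x y <= d.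
Proof.
case=> p [pp Hp]; have [_ [_ _ pmin]] := comm_height_attained x y.
by apply: le_trans (pmin _ pp) _; rewrite path_height_le; apply/allP.
Qed.

Lemma connect_in_comm_height x y : connect_in [set w | H w <= Phi x y] x y.
Proof.
have [p [pp Hp _]] := comm_height_attained x y; exists p; split=> //.
by apply/allP; rewrite -path_height_le Hp.
Qed.

Lemma comm_height_ge x y : H x <= Phi x y /\ H y <= Phi x y.
Proof. exact: connect_in_ends (connect_in_comm_height x y). Qed.

Lemma comm_height_in_range x y : range H (Phi x y).
Proof.
have [p [_ <- _]] := comm_height_attained x y.
by have [w _ Hw] := path_height_attained H x p; exists w.
Qed.

Lemma comm_height_ultra x y z : Phi x z <= Num.max (Phi x y) (Phi y z).
Proof.
apply: comm_height_le; apply: (@connect_in_trans _ _ _ x y z).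
  by apply: connect_in_sub (connect_in_comm_height x y) => w /= wx; rewrite le_max wx.
by apply: connect_in_sub (connect_in_comm_height y z) => w /= wy; rewrite le_max wy orbT.
Qed.

Lemma comm_heightC x y : Phi x y = Phi y x.
Proof.
by apply/le_anti; rewrite !comm_height_le //;
  apply: (connect_in_sym e_sym); apply: connect_in_comm_height.
Qed.

Lemma comm_height_edge x y : e x y -> Phi x y <= Num.max (H x) (H y).
Proof.
move=> exy; apply/comm_height_le/(connect_in_edge (y := x)) => //=.
  by apply: connect_in_refl; rewrite /= le_max lexx.
by rewrite le_max lexx orbT.
Qed.

Lemma comm_height_xx x : Phi x x <= H x.
Proof. by apply: comm_height_le; apply: connect_in_refl => /=. Qed.

Lemma comm_height_exit_gt (A : set Omega) h x y :
  (forall z, boundary e A z -> h < H z) -> A x -> ~ A y -> h < Phi x y.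
Proof.
move=> hA Ax nAy.
have [u [v [Au nAv euv Hv]]] := connect_in_exit (connect_in_comm_height x y) Ax nAy.
by apply: lt_le_trans Hv; apply: hA; split=> //; exists u; rewrite e_sym.
Qed.

Lemma comm_height_setP (A B : set Omega) a0 b0 : A a0 -> B b0 ->
  exists a b, [/\ A a, B b, comm_height_set e H A B = Phi a b
    & forall a' b', A a' -> B b' -> comm_height_set e H A B <= Phi a' b'].
Proof.
move=> Aa0 Bb0.
have [] := @minRP _ _ H [set c | exists a b, A a /\ B b /\ c = Phi a b].
- by exists (Phi a0 b0), a0, b0.
- by move=> s [a [b [_ [_ ->]]]]; apply: comm_height_in_range.
move=> [a [b [Aa [Bb cE]]]] cmin; exists a, b; split=> // a' b' Aa' Bb'.
by apply: cmin; exists a', b'.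
Qed.

Lemma stable_plateauP P : stable_plateau e H P ->
  [/\ P !=set0, forall x, P x -> H x = valH H P
    & forall z, boundary e P z -> valH H P < H z].
Proof.
case=> [[x0 Px0] [_ [h [Hc Hb]]]].
suff -> : valH H P = h by split=> //; exists x0.
have [x Px <-] : (H @` P) (valH H P) by apply: xgetPex; exists (H x0), x0.
exact: Hc.
Qed.

Lemma stable_plateau_sub P Q z : stable_plateau e H P -> stable_plateau e H Q ->
  P z -> Q z -> Q `<=` P.
Proof.
move=> sP sQ Pz Qz w Qw; apply: contrapT => nPw.
have [_ HP HPb] := stable_plateauP sP; have [_ HQ _] := stable_plateauP sQ.
have Qzw : connect_in Q z w by case: sQ => _ [Qconn _]; apply: Qconn.
have [u [v [Pu nPv euv Qv]]] := connect_in_exit Qzw Pz nPw.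
have : valH H P < H v by apply: HPb; split=> //; exists u; rewrite e_sym.
by rewrite HQ // -(HQ z) // HP // ltxx.
Qed.

Lemma stable_plateau_eq P Q z : stable_plateau e H P -> stable_plateau e H Q ->
  P z -> Q z -> P = Q.
Proof.
move=> sP sQ Pz Qz; apply/seteqP; split.
- exact: stable_plateau_sub sQ sP Qz Pz.
- exact: stable_plateau_sub sP sQ Pz Qz.
Qed.

Lemma breve_disjoint P y : stable_plateau e H P -> breve e H P y -> ~ P y.
Proof.
by move=> sP [Q [[sQ _] [QP Qy]]] Py; apply: QP; apply: stable_plateau_eq Qy Py.
Qed.

Lemma V1P P z : P !=set0 ->
  V1 e H P z <-> exists2 a, P a & Phi a z < comm_height_set e H P (breve e H P).
Proof.
move=> [a0 Pa0]; rewrite /V1 /Gamma1 /= ltrD2r.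
have [a [b [Pa /= -> cE cmin]]] := @comm_height_setP P [set z] a0 z Pa0 erefl.
rewrite cE; split=> [|[a' Pa' lt_c]]; first by exists a.
by apply: le_lt_trans lt_c; rewrite -cE; apply: cmin.
Qed.

Lemma level_component_stable_plateau (V : set Omega) z :
  V z -> (forall y, V y -> H z <= H y) ->
  (forall w, boundary e V w -> H z < H w) ->
  stable_plateau e H (connect_in [set u | V u /\ H u = H z] z).
Proof.
move=> Vz zmin Vbd.
split; first by exists z; apply: connect_in_refl.
split.
  move=> x y Lx Ly; apply: connect_in_restrict.
    exact: connect_in_trans (connect_in_sym e_sym Lx) Ly.
  by move=> w; apply: connect_in_trans Lx.
exists (H z); split=> [x zx|w [nzw [y [zy ewy]]]].
  by have [_ [_ ->]] := connect_in_ends zx.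
have [_ [Vy Hy]] := connect_in_ends zy.
have [Vw|nVw] := pselect (V w); last by apply: Vbd; split=> //; exists y.
rewrite lt_def zmin // andbT; apply/negP => /eqP Hzw; apply: nzw.
by apply: (connect_in_edge zy); rewrite // e_sym.
Qed.

Lemma ground_state_exists (x0 : Omega) : exists s, ground_states H s.
Proof.
have H0 : range H !=set0 by exists (H x0), x0.
have [_ [s _ <-] smin] := exists_min_in_range H0 (@subset_refl _ (range H)).
by exists s => z; apply: smin; exists z.
Qed.

Lemma OmegabarP q :
  Omegabar e H q <-> exists2 s, ground_states H s & Phi s q <= Phibar e H.
Proof.
have [s0 gs0] := ground_state_exists q; rewrite /Omegabar /=.
have [s [b [gs /= -> cE cmin]]] :=
  @comm_height_setP (ground_states H) [set q] s0 q gs0 erefl.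
split=> [le_bar|[s' gs' le_bar]]; first by exists s => //; rewrite -cE.
exact: le_trans (cmin _ _ gs' erefl) le_bar.
Qed.

Lemma comm_height_ground_le s s' :
  ground_states H s -> ground_states H s' -> Phi s s' <= Phibar e H.
Proof.
move=> gs gs'; have [] := @maxRP _ _ H
  [set c | exists s s', ground_states H s /\ ground_states H s' /\ c = Phi s s'].
- by exists (Phi s s'), s, s'.
- by move=> c [a [b [_ [_ ->]]]]; apply: comm_height_in_range.
by move=> _ cmax; apply: cmax; exists s, s'.
Qed.

Lemma comm_height_Omegabar_le a b :
  Omegabar e H a -> Omegabar e H b -> Phi a b <= Phibar e H.
Proof.
move=> /OmegabarP [s gs sa] /OmegabarP [s' gs' s'b].
apply: le_trans (comm_height_ultra a s b) _; rewrite ge_max comm_heightC sa /=.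
apply: le_trans (comm_height_ultra s s' b) _.
by rewrite ge_max s'b comm_height_ground_le.
Qed.

Lemma V1_disjoint P Q : plateaux1 e H P -> plateaux1 e H Q -> P <> Q ->
  V1 e H P `&` V1 e H Q = set0.
Proof.
move=> pP pQ PQ; have [P0 _ _] := stable_plateauP pP.1.
have [Q0 _ _] := stable_plateauP pQ.1.
have QB y : Q y -> breve e H P y by exists Q; split=> //; split=> //; apply/nesym.
have PB y : P y -> breve e H Q y by exists P.
rewrite -subset0 => z [/(V1P _ P0) [a Pa az] /(V1P _ Q0) [b Qb bz]].
have [b0 Qb0] := Q0; have [a0 Pa0] := P0.
have [_ [_ [_ _ _ cPmin]]] := comm_height_setP Pa0 (QB _ Qb0).
have [_ [_ [_ _ _ cQmin]]] := comm_height_setP Qb0 (PB _ Pa0).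
have := le_trans (cPmin _ _ Pa (QB _ Qb)) (comm_height_ultra a z b).
have := le_trans (cQmin _ _ Qb (PB _ Pa)) (comm_height_ultra b z a).
rewrite (comm_heightC z a) (comm_heightC z b) !le_max.
case/orP=> [|le_cQ]; first by rewrite leNgt bz.
case/orP=> [|le_cP]; first by rewrite leNgt az.
by have := lt_trans (lt_le_trans bz le_cQ) az; rewrite ltNge le_cP.
Qed.

Section FirstCycle.
Variable P : set Omega.
Hypothesis P_plateau : plateaux1 e H P.
Hypothesis breve_P0 : breve e H P !=set0.

Local Notation B := (breve e H P).
Local Notation c := (comm_height_set e H P B).
Local Notation V := (V1 e H P).

Let P_stable : stable_plateau e H P := P_plateau.1.

Lemma plateau_nonempty : P !=set0.
Proof. by case: (stable_plateauP P_stable). Qed.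

Lemma comm_height_plateau_breve :
  exists a b, [/\ P a, B b, c = Phi a b & forall a' b', P a' -> B b' -> c <= Phi a' b'].
Proof.
by have [a0 Pa0] := plateau_nonempty; have [b0 Bb0] := breve_P0;
  apply: comm_height_setP Pa0 Bb0.
Qed.

Lemma V1_iff z : V z <-> exists2 a, P a & Phi a z < c.
Proof. exact: V1P plateau_nonempty. Qed.

Lemma plateau_sub_V1 : P `<=` V.
Proof.
have [a [b [Pa Bb cE _]]] := comm_height_plateau_breve.
have [_ HP HPb] := stable_plateauP P_stable.
move=> x Px; apply/V1_iff; exists x => //; apply: le_lt_trans (comm_height_xx x) _.
rewrite HP // cE; apply: comm_height_exit_gt HPb Pa _.
exact: breve_disjoint P_stable Bb.
Qed.

Lemma breve_not_V1 y : B y -> ~ V y.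
Proof.
have [_ [_ [_ _ _ cmin]]] := comm_height_plateau_breve.
by move=> By /V1_iff [a Pa]; rewrite ltNge cmin.
Qed.

Lemma V1_lt z : V z -> H z < c.
Proof. by case/V1_iff=> a _; apply: le_lt_trans (comm_height_ge a z).2. Qed.

Lemma boundary_V1_ge w : boundary e V w -> c <= H w.
Proof.
move=> [nVw [y [Vy ewy]]]; rewrite leNgt; apply/negP => Hw; apply: nVw.
have /V1_iff [a Pa ay] := Vy; apply/V1_iff; exists a => //.
apply: le_lt_trans (comm_height_ultra a y w) _; rewrite gt_max ay /=.
by apply: le_lt_trans (comm_height_edge _) _; rewrite 1?e_sym // gt_max Hw V1_lt.
Qed.

Lemma V1_connected : connected_set e V.
Proof.
have from_P x : V x -> exists2 a, P a & connect_in V a x.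
  move=> /V1_iff [a Pa ax]; exists a => //.
  apply: (connect_in_restrict (connect_in_comm_height a x)) => w /comm_height_le aw.
  by apply/V1_iff; exists a => //; apply: le_lt_trans ax.
move=> x y /from_P [a Pa ax] /from_P [b Pb bx].
apply: connect_in_trans (connect_in_sym e_sym ax) _; apply: connect_in_trans bx.
by apply: connect_in_sub plateau_sub_V1 _; case: P_stable => _ [Pconn _]; apply: Pconn.
Qed.

Lemma V1_sub_Omegabar : V `<=` Omegabar e H.
Proof.
have [a [b [Pa [Q [[_ QO] [_ Qb]]] cE _]]] := comm_height_plateau_breve.
have c_le : c <= Phibar e H.
  by rewrite cE; apply: comm_height_Omegabar_le (P_plateau.2 _ Pa) (QO _ Qb).
move=> z /V1_iff [a' Pa' a'z]; have /OmegabarP [s gs sa'] := P_plateau.2 _ Pa'.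
apply/OmegabarP; exists s => //; apply: le_trans (comm_height_ultra s a' z) _.
by rewrite ge_max sa' /= (le_trans (ltW a'z)).
Qed.

Lemma V1_argmin_in_plateau z : V z -> (forall y, V y -> H z <= H y) -> P z.
Proof.
move=> Vz zmin; apply: contrapT => nPz.
have Vbd w : boundary e V w -> H z < H w.
  by move=> Vw; apply: lt_le_trans (V1_lt Vz) (boundary_V1_ge Vw).
set L := connect_in [set u | V u /\ H u = H z] z.
have L_plateau : plateaux1 e H L.
  split; first exact: level_component_stable_plateau.
  by move=> w Lw; have [_ [Vw _]] := connect_in_ends Lw; apply: V1_sub_Omegabar.
apply: (breve_not_V1 _ Vz); exists L; do !split=> //; last exact: connect_in_refl.
by move=> LP; apply: nPz; rewrite -LP; apply: connect_in_refl.
Qed.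

Lemma V1_ge_valH y : V y -> valH H P <= H y.
Proof.
have [_ HP _] := stable_plateauP P_stable; have [x0 Px0] := plateau_nonempty.
have V0 : H @` V !=set0 by exists (H x0), x0 => //; apply: plateau_sub_V1.
have VH : H @` V `<=` range H by move=> _ [w _ <-]; exists w.
have [_ [z Vz <-] zmin] := exists_min_in_range V0 VH.
rewrite -(HP z); last by apply: V1_argmin_in_plateau => // y' Vy'; apply: zmin; exists y'.
by move=> Vy; apply: zmin; exists y.
Qed.

Lemma bottom_V1 : bottom H V = P.
Proof.
have [_ HP _] := stable_plateauP P_stable.
apply/seteqP; split=> [z [Vz zmin]|z Pz]; first exact: V1_argmin_in_plateau.
by split=> [|y Vy]; [apply: plateau_sub_V1 | rewrite HP //; apply: V1_ge_valH].
Qed.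

Lemma min_V1 : minR (H @` V) = valH H P.
Proof.
have [_ HP _] := stable_plateauP P_stable; have [x0 Px0] := plateau_nonempty.
apply: minR_eq; first by exists x0; [apply: plateau_sub_V1 | apply: HP].
by move=> _ [y Vy <-]; apply: V1_ge_valH.
Qed.

(* An optimal path from P to breve P leaves V1 P at a state of height c. *)
Lemma min_boundary_V1 : minR (H @` boundary e V) = c.
Proof.
have [a [b [Pa Bb cE _]]] := comm_height_plateau_breve.
have [u [v [Vu nVv uv Hv]]] := connect_in_exit (connect_in_comm_height a b)
  (plateau_sub_V1 Pa) (breve_not_V1 Bb).
have Vv : boundary e V v by split=> //; exists u; rewrite e_sym.
apply: minR_eq; last by move=> _ [w Vw <-]; apply: boundary_V1_ge.
by exists v => //; apply/le_anti; rewrite boundary_V1_ge // cE Hv.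
Qed.

Lemma V1_cycle : is_cycle e H V.
Proof.
have [x0 Px0] := plateau_nonempty.
split; first by exists x0; apply: plateau_sub_V1.
split; first exact: V1_connected.
by move=> x w Vx Vw; apply: lt_le_trans (V1_lt Vx) (boundary_V1_ge Vw).
Qed.

Lemma depth_V1 : depth e H V = Gamma1 e H P.
Proof. by rewrite /depth min_V1 min_boundary_V1. Qed.

End FirstCycle.

Lemma breve_nonempty P :
  (exists P1 P2, plateaux1 e H P1 /\ plateaux1 e H P2 /\ P1 <> P2) -> breve e H P !=set0.
Proof.
move=> [P1 [P2 [pP1 [pP2 P12]]]].
have [P1P|P1P] := pselect (P1 = P).
  have [[x2 P2x2] _ _] := stable_plateauP pP2.1.
  by exists x2, P2; split=> //; split=> // P2P; apply: P12; rewrite P1P P2P.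
have [[x1 P1x1] _ _] := stable_plateauP pP1.1.
by exists x1, P1.
Qed.

End CommunicationHeight.

Theorem mainTheorem2 (R : realType) (Omega : finType) (e : rel Omega)
    (H : Omega -> R)
    (e_sym : symmetric e)
    (e_conn : forall x y : Omega, exists p, is_path e x y p)
    (nu0_ge2 : exists P Q, plateaux1 e H P /\ plateaux1 e H Q /\ P <> Q) :
  (forall P, plateaux1 e H P ->
     is_cycle e H (V1 e H P) /\ V1 e H P `<=` Omegabar e H /\
     bottom H (V1 e H P) = P /\ depth e H (V1 e H P) = Gamma1 e H P) /\
  (forall P Q, plateaux1 e H P -> plateaux1 e H Q -> P <> Q ->
     V1 e H P `&` V1 e H Q = set0).
Proof.
split; last exact: V1_disjoint.
move=> P pP; have B0 := breve_nonempty P nu0_ge2.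
split; first exact: V1_cycle.
split; first exact: V1_sub_Omegabar.
split; first exact: bottom_V1.
exact: depth_V1.
Qed.
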